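(* Let $q\in(0,1]$. Then $\mathrm{F\o l}^{\mathrm{inn}}(R(SU_q(2)))=1-q^2$ and $\mathrm{F\o l}(R(SU_q(2)))=q^{-2}-q^2$.
   Context: $R(SU_q(2))$ is the fusion algebra with irreducible objects $I=\mathbb{Z}_+=\{0,1,2,\dots\}$, unit $0$, trivial involution $\bar n=n$, product $m\cdot n=\sum_{k\in\{|m-n|,|m-n|+2,\dots,m+n\}}k$, and dimension function $d(n)=[n+1]_q$, where $[x]_q=\frac{q^{-x}-q^x}{q^{-1}-q}$ for $0<q<1$ and $[x]_1=x$. Write $\beta\subseteq r$ if $\beta$ has nonzero coefficient in $r$; $\mathrm{supp}(r)$ is the set of such $\beta$. For $A\subseteq I$, $|A|=\sum_{\beta\in A}d(\beta)^2$ and $A^c=I\setminus A$. A finite generating set is a finite $X\subseteq I$ (closed under the involution) such that every element of $I$ is contained in some product of elements of $X$. For finite $X,A\subseteq I$: $\partial_X(A)=\{\beta\in A:\exists x\in X,\ \mathrm{supp}(\beta x)\not\subseteq A\}\cup\{\beta\in A^c:\exists x\in X,\ \mathrm{supp}(\beta x)\not\subseteq A^c\}$ and $\partial^{\mathrm{inn}}_X(A)=\{\beta\in A:\exists x\in X,\ \mathrm{supp}(\beta x)\not\subseteq A\}$. Then $\mathrm{F\o l}_X=\inf_A|\partial_X A|/|A|$ and $\mathrm{F\o l}^{\mathrm{inn}}_X=\inf_A|\partial^{\mathrm{inn}}_X A|/|A|$ over nonempty finite $A\subseteq I$, and $\mathrm{F\o l}$, $\mathrm{F\o l}^{\mathrm{inn}}$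 are the infima of these over all finite generating sets $X$. *)

From HB Require Import structures.
From mathcomp Require Import all_boot all_order all_algebra.
From mathcomp Require Import all_classical all_reals.
Set Implicit Arguments. Unset Strict Implicit. Unset Printing Implicit Defensive.
Import Order.TTheory GRing.Theory Num.Theory.
Local Open Scope ring_scope.

(* Finite subsets of I = nat are represented by sequences (read as sets:
   membership; duplicates are irrelevant since we sum over [undup]). *)

(* support of the fusion product m.n in R(SU_q(2)):
   {|m-n|, |m-n|+2, ..., m+n} *)
Definition fus (m n : nat) : seq nat :=
  [seq (maxn m n - minn m n + 2 * i)%N | i <- iota 0 (minn m n).+1].

(* support of the product x_1 ... x_k of a list of irreducibles
   (empty product = unit 0); all coefficients are nonnegative, so the
   support of a product is the union of the supports *)
Fixpoint psupp (s : seq nat) : seq nat :=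
  match s with
  | [::] => [:: 0%N]
  | x :: s' => undup (flatten [seq fus k x | k <- psupp s'])
  end.

(* finite generating set: finite X (closed under the trivial involution)
   such that every element of I is in the support of some product of
   elements of X *)
Definition gen_set (X : seq nat) : Prop :=
  forall n : nat, exists s : seq nat, all (mem X) s /\ n \in psupp s.

Section Dims.
Variable R : realType.

Definition qint (q : R) (x : nat) : R :=
  if q == 1 then x%:R else (q ^- x - q ^+ x) / (q^-1 - q).

Definition dimq (q : R) (n : nat) : R := qint q n.+1.

Definition qsize (q : R) (A : seq nat) : R :=
  \sum_(b <- undup A) dimq q b ^+ 2.

Definition inner_bd (X A : seq nat) : seq nat :=
  [seq b <- undup A | has (fun x => ~~ all (mem A) (fus b x)) X].

(* outer part: b in A^c such that supp(b x) is not contained in A^c,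
   i.e. meets A.  Such b satisfy b <= max A + max X, so enumerating
   0 .. max A + max X lists all of them. *)
Definition outer_bd (X A : seq nat) : seq nat :=
  [seq b <- iota 0 (\max_(a <- A) a + \max_(x <- X) x).+1
     | (b \notin A) && has (fun x => has (mem A) (fus b x)) X].

Definition bd_size (q : R) (X A : seq nat) : R :=
  qsize q (inner_bd X A) + qsize q (outer_bd X A).
Definition inn_bd_size (q : R) (X A : seq nat) : R :=
  qsize q (inner_bd X A).

Local Open Scope classical_set_scope.

Definition FolX (q : R) (X : seq nat) : R :=
  inf [set r | exists A : seq nat, A != [::] /\ r = bd_size q X A / qsize q A].
Definition FolinnX (q : R) (X : seq nat) : R :=
  inf [set r | exists A : seq nat, A != [::] /\ r = inn_bd_size q X A / qsize q A].

Definition Fol (q : R) : R := inf [set FolX q X | X in gen_set].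
Definition Folinn (q : R) : R := inf [set FolinnX q X | X in gen_set].

End Dims.

From mathcomp Require Import all_boot all_order all_algebra.
From mathcomp Require Import all_classical all_reals.
From mathcomp Require Import ring lra zify.
Import Order.TTheory GRing.Theory Num.Theory.
Local Open Scope ring_scope.

(* Any generating set contains some x > 0. If m is the largest element of a
   finite A, then m lies in the inner boundary of A and m + x in the outer
   one, while A is contained in {0, ..., m}. Hence the lower bounds follow
   from (1 - q^2) |{0, ..., n}| <= d(n)^2 and (q^-2 - 1) |{0, ..., n - 1}|
   <= d(n)^2, which come from q d(n + 1) = d(n) + q^(n + 2). They are
   attained in the limit by X = {1} and A = {0, ..., n}, with boundaries {n}
   and {n + 1}: there the defects in these inequalities grow at most
   quadratically in n, whereas |A| grows at least cubically. *)

Lemma mem_fus_addn m n : (m + n)%N \in fus m n.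
Proof.
apply/mapP; exists (minn m n); first by rewrite mem_iota add0n ltnS leqnn.
rewrite /maxn /minn; case: ltnP => ?; lia.
Qed.

Lemma mem_fus_subn m n : (n <= m)%N -> (m - n)%N \in fus m n.
Proof.
move=> le_nm; apply/mapP; exists 0%N; first by rewrite mem_iota.
rewrite /maxn /minn; case: ltnP => ?; lia.
Qed.

Lemma fus_leq m n k : k \in fus m n -> (k <= m + n)%N.
Proof.
case/mapP => i; rewrite mem_iota add0n ltnS => /andP[_ le_i] ->.
move: le_i; rewrite /maxn /minn; case: ltnP => ?; lia.
Qed.

Lemma fus_geq m n k : k \in fus m n -> (maxn m n - minn m n <= k)%N.
Proof. by case/mapP => i _ ->; apply: leq_addr. Qed.

Lemma psupp_eq0 s : all (pred1 0%N) s -> psupp s = [:: 0%N].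
Proof. by elim: s => [|x s IHs] //= /andP[/eqP -> /IHs ->]. Qed.

Lemma gen_set_has_gt0 X : gen_set X -> exists2 x, x \in X & (0 < x)%N.
Proof.
move=> genX; have [s [sX s1]] := genX 1%N.
have [/psupp_eq0 s0 | /allPn[x xs x_neq0]] := boolP (all (pred1 0%N) s).
  by rewrite s0 in s1.
by exists x; [exact: (allP sX) | rewrite lt0n].
Qed.

Lemma gen_set1 : gen_set [:: 1%N].
Proof.
move=> n; exists (nseq n 1%N); split; first by rewrite all_nseq /= orbT.
elim: n => [|n IHn] //=; rewrite mem_undup; apply/flattenP.
by exists (fus n 1); [apply/mapP; exists n | rewrite -addn1 mem_fus_addn].
Qed.

Lemma bigmax_mem (A : seq nat) : A != [::] -> \max_(a <- A) a \in A.
Proof.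
elim: A => [|a A IHA] // _; rewrite big_cons inE.
have [-> | nA] := eqVneq A [::]; first by rewrite big_nil maxn0 eqxx.
by case/orP: (leq_total a (\max_(b <- A) b)) => [/maxn_idPr -> | /maxn_idPl ->];
  rewrite ?IHA ?orbT ?eqxx.
Qed.

Lemma leq_bigmax_mem (A : seq nat) a : a \in A -> (a <= \max_(b <- A) b)%N.
Proof. by move=> aA; apply: leq_bigmax_seq. Qed.

Section Boundary.
Variables (X A : seq nat) (x : nat).
Hypotheses (xX : x \in X) (x_gt0 : (0 < x)%N) (A_neq0 : A != [::]).

Local Notation m := (\max_(a <- A) a).

Lemma bigmax_mem_inner_bd : m \in inner_bd X A.
Proof.
rewrite mem_filter mem_undup bigmax_mem // andbT; apply/hasP; exists x => //.
apply/allPn; exists (m + x)%N; first exact: mem_fus_addn.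
by apply/negP => /leq_bigmax_mem; lia.
Qed.

Lemma bigmax_addn_mem_outer_bd : (m + x)%N \in outer_bd X A.
Proof.
rewrite mem_filter mem_iota leq0n add0n ltnS leq_add2l leq_bigmax_mem // !andbT.
apply/andP; split; first by apply/negP => /leq_bigmax_mem; lia.
apply/hasP; exists x => //; apply/hasP; exists m; last exact: bigmax_mem.
by have := @mem_fus_subn _ _ (leq_addl m x); rewrite addnK.
Qed.

End Boundary.

Arguments bigmax_mem_inner_bd {X A x}.
Arguments bigmax_addn_mem_outer_bd {X A x}.

Lemma inner_bd_iota1 n : {subset inner_bd [:: 1%N] (iota 0 n.+1) <= [:: n]}.
Proof.
move=> b; rewrite mem_filter mem_undup mem_iota has_seq1 inE.
case/andP => /allPn[k /fus_leq k_le]; rewrite -[mem _ k]/(k \in iota 0 n.+1) mem_iota.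
lia.
Qed.

Lemma outer_bd_iota1 n : {subset outer_bd [:: 1%N] (iota 0 n.+1) <= [:: n.+1]}.
Proof.
move=> b; rewrite mem_filter has_seq1 => /andP[/andP[b_notin]].
case/hasP => k /fus_geq k_ge k_in _; move: k_in b_notin.
rewrite -[mem _ k]/(k \in iota 0 n.+1) !mem_iota mem_seq1; lia.
Qed.

Lemma ler_sum_subset (R : numDomainType) (I : eqType) (s t : seq I) (w : I -> R) :
  uniq s -> uniq t -> {subset s <= t} -> (forall i, 0 <= w i) ->
  \sum_(i <- s) w i <= \sum_(i <- t) w i.
Proof.
move=> s_uniq t_uniq sub_st w_ge0.
have s_perm : perm_eq s [seq i <- t | i \in s].
  apply: uniq_perm; rewrite ?filter_uniq // => i.
  by rewrite mem_filter; case: (boolP (i \in s)) => //= /sub_st.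
rewrite (perm_big _ s_perm) big_filter [leRHS](bigID (mem s)) /= lerDl.
exact: sumr_ge0.
Qed.

Lemma quadratic_error_negligible (R : archiRealFieldType) (a s : nat -> R)
    (c C K : R) :
  0 <= C -> 0 < K ->
  (forall n, a n <= c * s n + C * n.+1%:R ^+ 2) ->
  (forall n, n.+1%:R ^+ 3 <= K * s n) ->
  forall e, 0 < e -> exists n, a n <= (c + e) * s n.
Proof.
move=> C_ge0 K_gt0 a_le s_ge e e_gt0; set n := Num.truncn (C * K / e); exists n.
have := truncnS_gt (C * K / e); rewrite -/n; set x := n.+1%:R => CK_lt.
have x_gt0 : 0 < x by rewrite ltr0n.
have CK_le : C * K <= e * x by rewrite -ler_pdivrMl // mulrC ltW.
have s_gt0 : 0 < s n.
  by have := s_ge n; rewrite -/x => /(lt_le_trans (exprn_gt0 3 x_gt0)); rewrite pmulr_rgt0.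
have : C * x ^+ 2 * x <= e * s n * x.
  rewrite -mulrA -exprSr (le_trans (ler_wpM2l C_ge0 (s_ge n))) // mulrA.
  by rewrite [e * _ * _]mulrAC ler_pM2r.
rewrite ler_pM2r // => Cx_le; have := a_le n; rewrite -/x; lra.
Qed.

Arguments quadratic_error_negligible {R a s c C K}.

Section Infimum.
Local Open Scope classical_set_scope.

Lemma inf_of_infs_eq (R : realType) (T U : Type) (G : set T) (N : U -> Prop)
    (F : T -> U -> R) (c : R) (x0 : T) :
  G x0 -> (forall x a, G x -> N a -> c <= F x a) ->
  (forall e, 0 < e -> exists2 a, N a & F x0 a <= c + e) ->
  inf [set inf [set r | exists a, N a /\ r = F x a] | x in G] = c.
Proof.
move=> Gx0 F_ge F_near.
have lb x : G x -> lbound [set r | exists a, N a /\ r = F x a] c.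
  by move=> Gx _ [a [Na ->]]; exact: F_ge.
have inf_ge x : G x -> c <= inf [set r | exists a, N a /\ r = F x a].
  move=> Gx; apply: lb_le_inf (lb x Gx).
  by have [a Na _] := F_near 1 ltr01; exists (F x a), a.
have inf_x0_le : inf [set r | exists a, N a /\ r = F x0 a] <= c.
  apply/ler_addgt0Pr => e e_gt0; have [a Na Fa_le] := F_near e e_gt0.
  by apply: le_trans Fa_le; apply: ge_inf; [exists c; exact: lb | exists a].
apply/eqP; rewrite eq_le; apply/andP; split.
- apply: le_trans inf_x0_le; apply: ge_inf; last by exists x0.
  by exists c => _ [x Gx <-]; exact: inf_ge.
- apply: lb_le_inf; first by exists (inf [set r | exists a, N a /\ r = F x0 a]), x0.
  by move=> _ [x Gx <-]; exact: inf_ge.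
Qed.

End Infimum.

Section QuantumDimension.
Variables (R : realType) (q : R).

Local Notation D := (dimq q).

Lemma qsize_subset {A B} : {subset A <= B} -> qsize q A <= qsize q B.
Proof.
move=> sub_AB; apply: ler_sum_subset; rewrite ?undup_uniq //.
- by move=> i; rewrite !mem_undup => /sub_AB.
- by move=> i; apply: sqr_ge0.
Qed.

Lemma qsize1 j : qsize q [:: j] = D j ^+ 2.
Proof. by rewrite /qsize big_seq1. Qed.

Lemma qsize_mem {A j} : j \in A -> D j ^+ 2 <= qsize q A.
Proof. by move=> jA; rewrite -qsize1; apply: qsize_subset => i /[!inE] /eqP ->. Qed.

Lemma qsize_iota0 : qsize q (iota 0 0) = 0.
Proof. by rewrite /qsize big_nil. Qed.

Lemma qsize_iotaS n : qsize q (iota 0 n.+1) = qsize q (iota 0 n) + D n ^+ 2.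
Proof. by rewrite /qsize !undup_id ?iota_uniq // -addn1 iotaD big_cat big_seq1. Qed.

Hypotheses (q_gt0 : 0 < q) (q_le1 : q <= 1).

Lemma q_neq0 : q != 0. Proof. by rewrite gt_eqF. Qed.

Lemma mulVq : q^-1 * q = 1. Proof. by rewrite mulVf ?q_neq0. Qed.

Lemma expq_gt0 n : 0 < q ^+ n. Proof. exact: exprn_gt0. Qed.

Lemma expq_le1 n : q ^+ n <= 1. Proof. exact/exprn_ile1/q_le1/ltW. Qed.

Lemma sqrq_le1 : q ^+ 2 <= 1. Proof. exact: expq_le1. Qed.

Lemma invq_addq_ge2 : 2 <= q^-1 + q.
Proof.
have : 0 <= q^-1 * (1 - q) ^+ 2 by rewrite mulr_ge0 ?sqr_ge0 ?invr_ge0 ?ltW.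
have -> : q^-1 * (1 - q) ^+ 2 = q^-1 - 2 * (q^-1 * q) + (q^-1 * q) * q by ring.
by rewrite mulVq; lra.
Qed.

Lemma subr_sqrq_neq0 : q != 1 -> 1 - q * q != 0.
Proof.
move=> q_neq1; have q_lt1 : q < 1 by rewrite lt_neqAle q_neq1.
have : 0 < q * (1 - q) by rewrite mulr_gt0 ?subr_gt0.
by rewrite subr_eq0 eq_sym; apply: contraTneq => /eqP; lra.
Qed.

Lemma dimq0 : D 0 = 1.
Proof.
rewrite /dimq /qint; case: ifPn => [_ // | q_neq1].
by rewrite expr1; field; rewrite q_neq0 mulNr subr_sqrq_neq0.
Qed.

Lemma dimqS n : D n.+1 = q^-1 * D n + q ^+ n.+1.
Proof.
rewrite /dimq /qint; case: ifPn => [/eqP -> | q_neq1].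
  by rewrite invr1 expr1n mul1r -[in LHS]addn1 natrD.
have expq_neq0 : q ^+ n.+1 != 0 by rewrite gt_eqF ?expq_gt0.
by rewrite [q ^+ n.+2]exprS; field; rewrite expq_neq0 q_neq0 mulNr subr_sqrq_neq0.
Qed.

Lemma mulq_dimqS n : q * D n.+1 = D n + q ^+ n.+2.
Proof. by rewrite dimqS mulrDr mulrA mulfV ?q_neq0 // mul1r -exprS. Qed.

Lemma dimq_gt0 n : 0 < D n.
Proof.
elim: n => [|n IHn]; first by rewrite dimq0.
by rewrite dimqS addr_gt0 ?expq_gt0 // mulr_gt0 // invr_gt0.
Qed.

Lemma dimq_increment_ge1 n : 1 <= D n.+1 - D n.
Proof.
elim: n => [|n IHn]; first by rewrite dimqS dimq0 mulr1 expr1; have := invq_addq_ge2; lra.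
have -> : D n.+2 - D n.+1 = q^-1 * (D n.+1 - D n) + q ^+ n.+1 * (q - 1).
  by rewrite [D n.+2]dimqS [D n.+1]dimqS !exprS; ring.
have : q^-1 <= q^-1 * (D n.+1 - D n) by rewrite ler_peMr // invr_ge0 ltW.
have : q - 1 <= q ^+ n.+1 * (q - 1).
  have : 0 <= (1 - q ^+ n.+1) * (1 - q) by rewrite mulr_ge0 ?subr_ge0 ?expq_le1.
  nra.
have := invq_addq_ge2; lra.
Qed.

Lemma dimq_ge n : n.+1%:R <= D n.
Proof.
elim: n => [|n IHn]; first by rewrite dimq0.
by have := dimq_increment_ge1 n; rewrite -[n.+2]addn1 natrD; lra.
Qed.

Lemma expq_dimq_le n : q ^+ n * D n <= n.+1%:R.
Proof.
elim: n => [|n IHn]; first by rewrite dimq0 expr0 mulr1.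
have -> : q ^+ n.+1 * D n.+1 = q ^+ n * D n + q ^+ (n.+1 * 2).
  by rewrite exprSr -mulrA mulq_dimqS mulrDr -exprD; congr (_ + q ^+ _); lia.
by have := expq_le1 (n.+1 * 2); rewrite -[n.+2%:R]natr1; lra.
Qed.

Lemma qsize_iota_cube_le n : n.+1%:R ^+ 3 <= 3 * qsize q (iota 0 n.+1).
Proof.
elim: n => [|n IHn]; first by rewrite qsize_iotaS qsize_iota0 dimq0 add0r !expr1n mulr1 ler1n.
rewrite qsize_iotaS mulrDr.
have : n.+2%:R ^+ 2 <= D n.+1 ^+ 2.
  by rewrite lerXn2r ?nnegrE ?ler0n ?dimq_ge //; exact/ltW/dimq_gt0.
rewrite -(addn1 n.+1) natrD -(addn1 n) natrD in IHn *.
have : 0 <= n%:R :> R by rewrite ler0n.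
nra.
Qed.

Definition inner_defect n := D n ^+ 2 - (1 - q ^+ 2) * qsize q (iota 0 n.+1).

Lemma inner_defect0 : inner_defect 0 = q ^+ 2.
Proof. by rewrite /inner_defect qsize_iotaS qsize_iota0 dimq0; ring. Qed.

Lemma inner_defectS n :
  inner_defect n.+1 = inner_defect n + q ^+ n.+2 * (2 * D n + q ^+ n.+2).
Proof.
rewrite /inner_defect qsize_iotaS.
have -> : D n = q * D n.+1 - q ^+ n.+2 by rewrite mulq_dimqS addrK.
ring.
Qed.

Lemma inner_defect_ge0 n : 0 <= inner_defect n.
Proof.
elim: n => [|n IHn]; first by rewrite inner_defect0 sqr_ge0.
by have := expq_gt0 n.+2; have := dimq_gt0 n; rewrite inner_defectS; nra.
Qed.

Lemma inner_defect_le n : inner_defect n <= n.+1%:R ^+ 2.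
Proof.
elim: n => [|n IHn]; first by rewrite inner_defect0 expr1n sqrq_le1.
have : q ^+ n.+2 * D n <= n.+1%:R.
  apply: le_trans (expq_dimq_le n); rewrite -addn2 exprD mulrAC ler_piMr ?sqrq_le1 //.
  by rewrite mulr_ge0 ?ltW ?expq_gt0 ?dimq_gt0.
have := expq_le1 (n.+2 * 2); rewrite exprM.
rewrite inner_defectS -[n.+2%:R]natr1; move: IHn; rewrite !expr2; nra.
Qed.

Lemma qsize_iota_inner_le n : (1 - q ^+ 2) * qsize q (iota 0 n.+1) <= D n ^+ 2.
Proof. by have := inner_defect_ge0 n; rewrite subr_ge0. Qed.

Lemma qsize_iota_outer_le n : (q ^- 2 - 1) * qsize q (iota 0 n) <= D n ^+ 2.
Proof.
case: n => [|n]; first by rewrite qsize_iota0 mulr0 sqr_ge0.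
have -> : q ^- 2 - 1 = q ^- 2 * (1 - q ^+ 2).
  by rewrite mulrBr mulr1 mulVf ?expf_neq0 ?q_neq0.
rewrite -mulrA; apply: (@le_trans _ _ (q ^- 2 * D n ^+ 2)).
  by rewrite ler_pM2l ?qsize_iota_inner_le // invr_gt0 expq_gt0.
rewrite -exprVn -exprMn dimqS lerXn2r ?nnegrE ?lerDl ?ltW ?expq_gt0 //.
  by rewrite mulr_gt0 ?dimq_gt0 // invr_gt0.
by rewrite addr_gt0 ?expq_gt0 // mulr_gt0 ?dimq_gt0 // invr_gt0.
Qed.

Lemma dimqS_sqr_le n : D n.+1 ^+ 2 <= q ^- 2 * D n ^+ 2 + 2 * n.+1%:R + 1.
Proof.
have -> : D n.+1 ^+ 2 = q ^- 2 * D n ^+ 2 + 2 * (q ^+ n * D n) + q ^+ (n.+1 * 2).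
  by rewrite dimqS exprM -exprVn [q ^+ n.+1]exprS; field; rewrite q_neq0.
by have := expq_dimq_le n; have := expq_le1 (n.+1 * 2); lra.
Qed.

Lemma qsize_gt0 A : A != [::] -> 0 < qsize q A.
Proof.
by case: A => // a A _; apply: lt_le_trans (qsize_mem (mem_head a A)); rewrite exprn_gt0 ?dimq_gt0.
Qed.

Lemma qsize_le_iota A n : (forall a, a \in A -> a < n)%N -> qsize q A <= qsize q (iota 0 n).
Proof. by move=> A_lt; apply: qsize_subset => a /A_lt; rewrite mem_iota. Qed.

Section LowerBounds.
Variables (X A : seq nat) (x : nat).
Hypotheses (xX : x \in X) (x_gt0 : (0 < x)%N) (A_neq0 : A != [::]).

Local Notation m := (\max_(a <- A) a).

Lemma inn_bd_size_ge : (1 - q ^+ 2) * qsize q A <= inn_bd_size q X A.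
Proof.
apply: le_trans (qsize_mem (bigmax_mem_inner_bd xX x_gt0 A_neq0)).
apply: le_trans (qsize_iota_inner_le m); rewrite ler_wpM2l ?subr_ge0 ?sqrq_le1 //.
by apply: qsize_le_iota => a /leq_bigmax_mem.
Qed.

Lemma outer_bd_size_ge : (q ^- 2 - 1) * qsize q A <= qsize q (outer_bd X A).
Proof.
apply: le_trans (qsize_mem (bigmax_addn_mem_outer_bd xX x_gt0 A_neq0)).
apply: le_trans (qsize_iota_outer_le (m + x)).
rewrite ler_wpM2l ?subr_ge0 ?invr_ge1 ?sqrq_le1 ?unitfE ?expf_neq0 ?q_neq0 ?expq_gt0 //.
by apply: qsize_le_iota => a /leq_bigmax_mem; lia.
Qed.

Lemma bd_size_ge : (q ^- 2 - q ^+ 2) * qsize q A <= bd_size q X A.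
Proof. by have := inn_bd_size_ge; have := outer_bd_size_ge; rewrite /bd_size /inn_bd_size; lra. Qed.

End LowerBounds.

Lemma inn_bd_size_iota1_le n :
  inn_bd_size q [:: 1%N] (iota 0 n.+1) <= (1 - q ^+ 2) * qsize q (iota 0 n.+1) + n.+1%:R ^+ 2.
Proof.
rewrite /inn_bd_size (le_trans (qsize_subset (inner_bd_iota1 n))) // qsize1.
by have := inner_defect_le n; rewrite /inner_defect; lra.
Qed.

Lemma bd_size_iota1_le n :
  bd_size q [:: 1%N] (iota 0 n.+1) <=
    (q ^- 2 - q ^+ 2) * qsize q (iota 0 n.+1) + (q ^- 2 + 4) * n.+1%:R ^+ 2.
Proof.
rewrite /bd_size (le_trans (lerD (qsize_subset (inner_bd_iota1 n))
                                 (qsize_subset (outer_bd_iota1 n)))) // !qsize1.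
set S := qsize q (iota 0 n.+1); set x := n.+1%:R; set P := q ^- 2.
have P_ge0 : 0 <= P by rewrite invr_ge0 ltW ?expq_gt0.
have x_le : x <= x ^+ 2 by rewrite expr2 ler_peMl ?ler0n ?ler1n.
have inner : D n ^+ 2 <= (1 - q ^+ 2) * S + x ^+ 2.
  by have := inner_defect_le n; rewrite /inner_defect -/S -/x; lra.
have := ler_wpM2l P_ge0 inner; have := dimqS_sqr_le n; rewrite -/x -/P.
have -> : P - q ^+ 2 = (1 + P) * (1 - q ^+ 2).
  by rewrite /P; field; exact: q_neq0.
have : 1 <= x by rewrite ler1n.
nra.
Qed.

Lemma exists_inn_bd_ratio_le e : 0 < e ->
  exists2 A, A != [::] & inn_bd_size q [:: 1%N] A / qsize q A <= 1 - q ^+ 2 + e.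
Proof.
move=> e_gt0.
have a_le n : inn_bd_size q [:: 1%N] (iota 0 n.+1) <=
    (1 - q ^+ 2) * qsize q (iota 0 n.+1) + 1 * n.+1%:R ^+ 2.
  by rewrite mul1r inn_bd_size_iota1_le.
have [n n_le] := quadratic_error_negligible ler01 (ltr0n _ 3) a_le qsize_iota_cube_le _ e_gt0.
by exists (iota 0 n.+1); rewrite // ler_pdivrMr ?qsize_gt0.
Qed.

Lemma exists_bd_ratio_le e : 0 < e ->
  exists2 A, A != [::] & bd_size q [:: 1%N] A / qsize q A <= q ^- 2 - q ^+ 2 + e.
Proof.
move=> e_gt0; have C_ge0 : 0 <= q ^- 2 + 4 by rewrite addr_ge0 ?invr_ge0 ?exprn_ge0 ?ltW.
have [n n_le] := quadratic_error_negligible C_ge0 (ltr0n _ 3) bd_size_iota1_le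
  qsize_iota_cube_le _ e_gt0.
by exists (iota 0 n.+1); rewrite // ler_pdivrMr ?qsize_gt0.
Qed.

End QuantumDimension.


Theorem proposition4p4 (R : realType) (q : R) (hq0 : 0 < q) (hq1 : q <= 1) :
  Folinn q = 1 - q ^+ 2 /\ Fol q = q ^- 2 - q ^+ 2.
Proof.
split.
- apply: (@inf_of_infs_eq _ _ _ gen_set (fun A => A != [::])
    (fun X A => inn_bd_size q X A / qsize q A) _ _ gen_set1).
  + move=> X A /gen_set_has_gt0[x xX x_gt0] A_neq0.
    by rewrite ler_pdivlMr ?qsize_gt0 //; apply: inn_bd_size_ge xX x_gt0 A_neq0.
  + exact: exists_inn_bd_ratio_le.
- apply: (@inf_of_infs_eq _ _ _ gen_set (fun A => A != [::])
    (fun X A => bd_size q X A / qsize q A) _ _ gen_set1).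
  + move=> X A /gen_set_has_gt0[x xX x_gt0] A_neq0.
    by rewrite ler_pdivlMr ?qsize_gt0 //; apply: bd_size_ge xX x_gt0 A_neq0.
  + exact: exists_bd_ratio_le.
Qed.
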